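(* Let $\mathit{VI}$ be a finite set of variables with $\#\mathit{VI}=n$. Let $\mathit{PSD}^{+}=\{sh\in\mathit{PSD}\mid\forall x\in\mathit{VI}:\{x\}\in sh\}$, $\mathit{Def}^{-}=\mathit{PSD}\sim\mathit{PSD}^{+}$, and $\mathit{PSD}^{\ddagger}=\{sh\in\mathit{PSD}\mid\mathit{VI}\in sh,\ \forall x\in\mathit{VI}:\{x\}\in sh\}$. Then $\mathit{Def}^{-}$, $\mathit{PS}$, and $\mathit{PSD}^{\ddagger}$ form a minimal decomposition for $\mathit{PSD}$.
   Context: $\mathit{SG}=\wp(\mathit{VI})\setminus\{\emptyset\}$, $\mathit{SH}=\wp(\mathit{SG})$ ordered by inclusion. $\mathrm{pairs}(S)=\{T\subseteq S\mid\#T=2\}$, $\mathrm{pairs}(sh)=\bigcup_{S'\in sh}\mathrm{pairs}(S')$, $\mathit{PS}=\{\rho_{\mathit{PS}}(sh)\mid sh\in\mathit{SH}\}$ with $\rho_{\mathit{PS}}(sh)=\{S\in\mathit{SG}\mid\mathrm{pairs}(S)\subseteq\mathrm{pairs}(sh)\}$. $\mathit{PSD}=\{\rho_{\mathit{PSD}}(sh)\mid sh\in\mathit{SH}\}$ with $\rho_{\mathit{PSD}}(sh)=\{\,S\in\mathit{SG}\mid \forall T\subseteq S:\ \#T<2\implies S=\bigcup\{U\in sh\mid T\subseteq U\subseteq S\}\,\}$; it is a complete lattice under inclusion. Upper closure operators on a complete lattice $C$ are identified with their images (subsets closed under arbitrary meets); $\mathrm{uco}(C)$ is ordered by $\rho_1\sqsubseteq\rho_2$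 iff $\rho_2(C)\subseteq\rho_1(C)$, with reduced product $\sqcap$ the glb (image = meet-closure of the union of images). For $D\subseteq C$ the image of some $\rho\in\mathrm{uco}(C)$, $C\sim D=\mathrm{lub}\{\rho_2\in\mathrm{uco}(C)\mid\rho\sqcap\rho_2=\mathit{id}_C\}$. A family $D_1,\dots,D_m$ of such images is a decomposition of $C$ if $C=D_1\sqcap\dots\sqcap D_m$; it is minimal if for each $i$ and each $E_i\in\mathrm{uco}(C)$ with $D_i\sqsubset E_i$, one has $C\sqsubset D_1\sqcap\dots\sqcap D_{i-1}\sqcap E_i\sqcap D_{i+1}\sqcap\dots\sqcap D_m$. *)

From mathcomp Require Import all_boot.
Set Implicit Arguments. Unset Strict Implicit. Unset Printing Implicit Defensive.

Section Sharing.
Variable VI : finType.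

(* SH = subsets of SG = nonempty subsets of VI *)
Definition SH : {set {set {set VI}}} := [set sh : {set {set VI}} | set0 \notin sh].

Definition pairsS (S : {set VI}) : {set {set VI}} :=
  [set T0 : {set VI} | (T0 \subset S) && (#|T0| == 2)].
Definition pairsSH (sh : {set {set VI}}) : {set {set VI}} :=
  \bigcup_(S in sh) pairsS S.

Definition rhoPS (sh : {set {set VI}}) : {set {set VI}} :=
  [set S : {set VI} | (S != set0) && (pairsS S \subset pairsSH sh)].

Definition rhoPSD (sh : {set {set VI}}) : {set {set VI}} :=
  [set S : {set VI} | (S != set0) &&
     [forall T0 : {set VI}, ((T0 \subset S) && (#|T0| < 2)) ==>
        (S == \bigcup_(U in sh | (T0 \subset U) && (U \subset S)) U)]].

Definition PS  : {set {set {set VI}}} := [set rhoPS sh | sh in SH].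
Definition PSD : {set {set {set VI}}} := [set rhoPSD sh | sh in SH].

Definition PSDplus : {set {set {set VI}}} :=
  [set sh in PSD | [forall x : VI, [set x] \in sh]].
Definition PSDddag : {set {set {set VI}}} :=
  [set sh in PSD | (setT \in sh) && [forall x : VI, [set x] \in sh]].
End Sharing.

Section UCO.
Variable W : finType.
Implicit Types (C D E A X : {set {set W}}) (m : {set W}).

Definition is_meet C X m : bool :=
  [&& m \in C, [forall x in X, m \subset x] &
      [forall y in C, [forall x in X, y \subset x] ==> (y \subset m)]].

(* D is the image of an upper closure operator on C:
   D is a subset of C closed under arbitrary meets of C *)
Definition uco_image C D : bool :=
  (D \subset C) &&
  [forall X : {set {set W}}, forall m : {set W},
     ((X \subset D) && is_meet C X m) ==> (m \in D)].

(* meet-closure in C of A: image of the reduced product (glb in uco(C))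
   of the ucos whose images are united in A *)
Definition meet_closure C A : {set {set W}} :=
  [set m | [exists X : {set {set W}}, (X \subset A) && is_meet C X m]].

(* C ~ D : lub in uco(C) (rho1 <= rho2 iff img rho2 \subset img rho1)
   of all rho2 with D (x) rho2 = id_C; the lub of ucos has as image the
   intersection of the images. *)
Definition complement C D : {set {set W}} :=
  \bigcap_(D2 : {set {set W}} |
             uco_image C D2 && (meet_closure C (D :|: D2) == C)) D2.

Definition decomposition3 C D1 D2 D3 : Prop :=
  [/\ uco_image C D1, uco_image C D2, uco_image C D3 &
      meet_closure C (D1 :|: D2 :|: D3) = C].

(* minimality: replacing any D_i by a strictly more abstract E_i
   (img E_i proper subset of img D_i) loses precision:
   C strictly below the product, i.e. its image is a proper subset of C *)
Definition minimal_decomposition3 C D1 D2 D3 : Prop :=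
  decomposition3 C D1 D2 D3 /\
  [/\ forall E, uco_image C E -> E \proper D1 ->
        meet_closure C (E :|: D2 :|: D3) \proper C,
      forall E, uco_image C E -> E \proper D2 ->
        meet_closure C (D1 :|: E :|: D3) \proper C &
      forall E, uco_image C E -> E \proper D3 ->
        meet_closure C (D1 :|: D2 :|: E) \proper C].
End UCO.

From mathcomp Require Import all_boot.
Set Implicit Arguments. Unset Strict Implicit. Unset Printing Implicit Defensive.

(* PSD is a finite lattice, so each element is the meet of the meet-irreducible
   elements above it, and the complement PSD ~ D is the meet-closure of the
   meet-irreducibles outside D.  A meet-irreducible element of PSD either misses a
   singleton (it lies in Def^-), or contains VI and all singletons (it lies in
   PSD^ddag), or contains all singletons but not VI, and then it is closed under
   rhoPS, hence lies in PS.  Minimality: a proper abstraction of Def^- loses a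
   meet-irreducible outside PSD^+, which the other two components cannot rebuild;
   one of PS loses some [avoid_pair a b], whose upper bounds in the other
   components all contain VI; one of PSD^ddag loses some d, above which Def^- and
   PS only contain the top of PSD. *)

Section MeetClosure.
Variables (W : finType) (C : {set {set W}}).
Implicit Types (X A B D E : {set {set W}}) (m c d y : {set W}).

Lemma is_meetP X m : reflect [/\ m \in C, forall x, x \in X -> m \subset x &
  forall y, y \in C -> (forall x, x \in X -> y \subset x) -> y \subset m]
  (is_meet C X m).
Proof.
apply: (iffP and3P) => [[mC /forall_inP mX /forall_inP mglb]|[mC mX mglb]].
  split=> // y yC yX; apply: (implyP (mglb y yC)); exact/forall_inP.
split=> //; first exact/forall_inP.
by apply/forall_inP => y yC; apply/implyP => /forall_inP; apply: mglb.
Qed.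

Lemma meet_closureP A m :
  reflect (exists2 X : {set {set W}}, X \subset A & is_meet C X m) (m \in meet_closure C A).
Proof.
rewrite inE; apply: (iffP existsP) => [[X /andP[]]|[X XA mX]]; first by exists X.
by exists X; rewrite XA.
Qed.

Lemma mem_meet_closure A X m : X \subset A -> is_meet C X m -> m \in meet_closure C A.
Proof. by move=> XA mX; apply/meet_closureP; exists X. Qed.

Lemma meet_closure_sub A : meet_closure C A \subset C.
Proof. by apply/subsetP => m /meet_closureP[X _ /is_meetP[]]. Qed.

Lemma meet_closure_ext A d : d \in C -> d \in A -> d \in meet_closure C A.
Proof.
move=> dC dA; apply: (@mem_meet_closure _ [set d]); first by rewrite sub1set.
by apply/is_meetP; split=> [//|x /set1P->//|y _]; apply; apply: set11.
Qed.

Lemma meet_closure_upper A m :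
  m \in meet_closure C A -> is_meet C [set a in A | m \subset a] m.
Proof.
case/meet_closureP => X XA /is_meetP[mC mX mglb]; apply/is_meetP; split=> //.
  by move=> a /setIdP[].
move=> y yC yup; apply: mglb => // x xX; apply: yup.
by rewrite inE (subsetP XA) ?mX.
Qed.

Lemma uco_meet_closure A : uco_image C (meet_closure C A).
Proof.
rewrite /uco_image meet_closure_sub; apply/forallP => X; apply/forallP => m.
apply/implyP => /andP[XM /is_meetP[mC mX mglb]].
apply: (@mem_meet_closure _ [set a in A | m \subset a]); first by apply/subsetP => a /setIdP[].
apply/is_meetP; split=> //; first by move=> a /setIdP[].
move=> y yC yup; apply: mglb => // x xX.
have /is_meetP[_ _ xglb] := meet_closure_upper (subsetP XM x xX).
apply: xglb => // a /setIdP[aA xa]; apply: yup.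
by rewrite inE aA (subset_trans (mX x xX) xa).
Qed.

Lemma uco_image_sub D : uco_image C D -> D \subset C.
Proof. by case/andP. Qed.

Lemma uco_image_meet D X m : uco_image C D -> X \subset D -> is_meet C X m -> m \in D.
Proof.
case/andP => _ /forallP/(_ X)/forallP/(_ m)/implyP uD XD mX.
by apply: uD; rewrite XD.
Qed.

Lemma meet_closure_uco D A : uco_image C D -> A \subset D -> meet_closure C A \subset D.
Proof.
move=> uD AD; apply/subsetP => m /meet_closureP[X XA mX].
exact: uco_image_meet uD (subset_trans XA AD) mX.
Qed.

Lemma meet_closure_top A m : m \in meet_closure C A ->
  (forall a, a \in A -> ~~ (m \subset a)) -> forall y, y \in C -> y \subset m.
Proof.
move=> /meet_closure_upper/is_meetP[_ _ mglb] noup y yC; apply: mglb => // a.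
by case/setIdP => aA ma; case/negP: (noup a aA).
Qed.

Lemma notin_meet_closure A c y : y \in C -> ~~ (y \subset c) ->
  (forall a, a \in A -> c \subset a -> y \subset a) -> c \notin meet_closure C A.
Proof.
move=> yC ync yup; apply: contra ync => /meet_closure_upper/is_meetP[_ _ cglb].
by apply: cglb => // a /setIdP[]; apply: yup.
Qed.

Lemma meet_closure_drop_tops A B m :
    (forall a, a \in A -> m \subset a -> forall y, y \in C -> y \subset a) ->
  m \in meet_closure C (A :|: B) -> m \in meet_closure C B.
Proof.
move=> Atop /meet_closure_upper/is_meetP[mC _ mglb].
apply: (@mem_meet_closure _ [set b in B | m \subset b]); first by apply/subsetP => a /setIdP[].
apply/is_meetP; split=> //; first by move=> b /setIdP[].
move=> y yC yup; apply: mglb => // a /setIdP[/setUP[aA|aB] ma]; first exact: Atop.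
by apply: yup; rewrite inE aB.
Qed.

Lemma uco_image_upper b : b \in C -> uco_image C [set c in C | b \subset c].
Proof.
move=> bC; apply/andP; split; first by apply/subsetP => c /setIdP[].
apply/forallP => X; apply/forallP => m; apply/implyP => /andP[XU /is_meetP[mC _ mglb]].
rewrite inE mC /=; apply: mglb => // x /(subsetP XU) /setIdP[] //.
Qed.

Definition meet_irr := [set m in C | ~~ is_meet C [set a in C | m \proper a] m].

Lemma meet_irr_sub : meet_irr \subset C.
Proof. by apply/subsetP => m /setIdP[]. Qed.

Lemma meet_irr_mem X m : m \in meet_irr -> X \subset C -> is_meet C X m -> m \in X.
Proof.
case/setIdP => mC mirr XC /is_meetP[_ mX mglb]; apply/negPn/negP => mnX.
case/negP: mirr; apply/is_meetP; split=> //; first by move=> a /setIdP[_ /proper_sub].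
move=> y yC yup; apply: mglb => // x xX; apply: yup.
rewrite inE (subsetP XC) //= properEneq mX // andbT.
by apply: contraNneq mnX => ->.
Qed.

Lemma meet_irr_closure A m :
  m \in meet_irr -> A \subset C -> m \in meet_closure C A -> m \in A.
Proof.
move=> mirr AC /meet_closureP[X XA mX]; apply: (subsetP XA).
exact: meet_irr_mem mirr (subset_trans XA AC) mX.
Qed.

(* Induction on the number of sets missing from [c]: a reducible [c] is the
   meet of strictly larger elements, each of which is a meet of irreducibles. *)
Lemma is_meet_irr_above c : c \in C -> is_meet C [set a in meet_irr | c \subset a] c.
Proof.
elim: {c}#|~: c|.+1 {-2}c (ltnSn #|~: c|) => // k IHk c ck cC.
have [cirr|cred] := boolP (c \in meet_irr).
  apply/is_meetP; split=> //; first by move=> a /setIdP[].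
  by move=> y _; apply; rewrite inE cirr subxx.
have /is_meetP[_ _ cglb] : is_meet C [set a in C | c \proper a] c.
  by move: cred; rewrite inE cC negbK.
apply/is_meetP; split=> //; first by move=> a /setIdP[].
move=> y yC yup; apply: cglb => // a /setIdP[aC ca].
have ak : #|~: a| < k.
  by rewrite -ltnS (leq_trans _ ck) // ltnS proper_card // properC.
have /is_meetP[_ _ aglb] := IHk a ak aC; apply: aglb => // b /setIdP[birr ab].
by apply: yup; rewrite inE birr (subset_trans (proper_sub ca) ab).
Qed.

Lemma meet_closure_irr A c : c \in C ->
  (forall a, a \in meet_irr -> c \subset a -> a \in A) -> c \in meet_closure C A.
Proof.
move=> cC irrA; apply: (mem_meet_closure _ (is_meet_irr_above cC)).
by apply/subsetP => a /setIdP[]; apply: irrA.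
Qed.

Lemma complementE D : D \subset C -> complement C D = meet_closure C (meet_irr :\: D).
Proof.
move=> DC; set G := meet_closure C (meet_irr :\: D).
have G_compl : uco_image C G && (meet_closure C (D :|: G) == C).
  rewrite uco_meet_closure eqEsubset meet_closure_sub /=.
  apply/subsetP => c cC; apply: meet_closure_irr => // a airr _.
  have [aD|aD] := boolP (a \in D); first by rewrite inE aD.
  rewrite inE meet_closure_ext ?orbT //; last by rewrite inE aD airr.
  exact: (subsetP meet_irr_sub).
apply/eqP; rewrite eqEsubset /complement (@bigcap_inf _ _ G _ id G_compl).
apply/bigcapsP => D2 /andP[uD2 /eqP DD2]; apply: meet_closure_uco => //.
apply/subsetP => a /setDP[airr aD].
have : a \in D :|: D2.
  apply: (meet_irr_closure airr); first by rewrite subUset DC uco_image_sub.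
  by rewrite DD2 (subsetP meet_irr_sub _ airr).
by rewrite inE (negbTE aD).
Qed.

Lemma complement_minimal D A E : D \subset C -> A \subset D -> uco_image C E ->
  E \proper meet_closure C (meet_irr :\: D) -> meet_closure C (E :|: A) \proper C.
Proof.
move=> DC AD uE EG; rewrite properE meet_closure_sub /=.
have : ~~ (meet_irr :\: D \subset E).
  by apply: contraL EG => IE; rewrite properE negb_and negbK (meet_closure_uco uE IE) orbT.
case/subsetPn => m /setDP[mirr mD] mE; apply/subsetPn; exists m.
  exact: (subsetP meet_irr_sub).
apply: contra mD => /meet_irr_closure.
rewrite subUset uco_image_sub // (subset_trans AD DC) => /(_ mirr isT).
by rewrite inE (negbTE mE) => /(subsetP AD).
Qed.

End MeetClosure.

Section SharingDomains.
Variable VI : finType.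
Implicit Types (sh c d p y : {set {set VI}}) (S T U : {set VI}).

Lemma rhoPSDP sh S : reflect (S != set0 /\ forall T z, T \subset S -> #|T| < 2 -> z \in S ->
    exists U, [/\ U \in sh, T \subset U, U \subset S & z \in U])
  (S \in rhoPSD sh).
Proof.
rewrite inE; apply: (iffP andP) => -[S0 cover]; split=> //.
  move=> T z TS T2 zS; move/forallP/(_ T)/implyP: cover; rewrite TS T2 => /(_ isT)/eqP SE.
  by move: zS; rewrite {1}SE => /bigcupP[U /andP[Ush /andP[TU US]] zU]; exists U.
apply/forallP => T; apply/implyP => /andP[TS T2]; rewrite eqEsubset.
apply/andP; split; last by apply/bigcupsP => U /andP[_ /andP[]].
apply/subsetP => z zS; have [U [Ush TU US zU]] := cover T z TS T2 zS.
by apply/bigcupP; exists U; rewrite ?Ush ?TU.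
Qed.

Lemma rhoPSD_ext sh : set0 \notin sh -> sh \subset rhoPSD sh.
Proof.
move=> sh0; apply/subsetP => S Ssh; apply/rhoPSDP; split.
  by apply: contraNneq sh0 => <-.
by move=> T z TS _ zS; exists S.
Qed.

Lemma rhoPSD_mono sh1 sh2 : sh1 \subset sh2 -> rhoPSD sh1 \subset rhoPSD sh2.
Proof.
move=> sh12; apply/subsetP => S /rhoPSDP[S0 cover]; apply/rhoPSDP; split=> // T z TS T2 zS.
by have [U [/(subsetP sh12) ? ? ? ?]] := cover T z TS T2 zS; exists U.
Qed.

Lemma rhoPSD_idem sh : rhoPSD (rhoPSD sh) \subset rhoPSD sh.
Proof.
apply/subsetP => S /rhoPSDP[S0 cover]; apply/rhoPSDP; split=> // T z TS T2 zS.
have [U [/rhoPSDP[_ coverU] TU US zU]] := cover T z TS T2 zS.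
have [V [? ? VU ?]] := coverU T z TU T2 zU.
by exists V; split=> //; apply: subset_trans VU US.
Qed.

Lemma set0_notin_rhoPSD sh : set0 \notin rhoPSD sh.
Proof. by rewrite inE eqxx. Qed.

Lemma PSD_P c : reflect (set0 \notin c /\ rhoPSD c \subset c) (c \in PSD VI).
Proof.
apply: (iffP idP) => [/imsetP[sh _ ->]|[c0 rhoc]].
  by split; [apply: set0_notin_rhoPSD | apply: rhoPSD_idem].
apply/imsetP; exists c; first by rewrite inE.
by apply/eqP; rewrite eqEsubset rhoc rhoPSD_ext.
Qed.

Lemma rhoPSD_PSD sh : rhoPSD sh \in PSD VI.
Proof. by apply/PSD_P; split; [apply: set0_notin_rhoPSD | apply: rhoPSD_idem]. Qed.

Lemma rhoPSD_id c : c \in PSD VI -> rhoPSD c = c.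
Proof. by case/PSD_P => c0 rhoc; apply/eqP; rewrite eqEsubset rhoc rhoPSD_ext. Qed.

Lemma PSD_neq0 c S : c \in PSD VI -> S \in c -> S != set0.
Proof. by case/PSD_P => c0 _ Sc; apply: contraNneq c0 => <-. Qed.

Lemma pairsSE T S : (T \in pairsS S) = (T \subset S) && (#|T| == 2).
Proof. by rewrite inE. Qed.

Lemma mem_pairsSH sh S T : S \in sh -> T \in pairsS S -> T \in pairsSH sh.
Proof. by move=> Ssh TS; apply/bigcupP; exists S. Qed.

Lemma rhoPSE sh S : (S \in rhoPS sh) = (S != set0) && (pairsS S \subset pairsSH sh).
Proof. by rewrite inE. Qed.

Lemma rhoPS_mono sh1 sh2 : sh1 \subset sh2 -> rhoPS sh1 \subset rhoPS sh2.
Proof.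
move=> sh12; apply/subsetP => S; rewrite !rhoPSE => /andP[-> /subset_trans]; apply.
by apply/subsetP => T /bigcupP[U /(subsetP sh12) Ush TU]; apply: mem_pairsSH Ush TU.
Qed.

Lemma rhoPS_ext sh : set0 \notin sh -> sh \subset rhoPS sh.
Proof.
move=> sh0; apply/subsetP => S Ssh; rewrite rhoPSE; apply/andP; split.
  by apply: contraNneq sh0 => <-.
by apply/subsetP => T; apply: mem_pairsSH Ssh.
Qed.

Lemma rhoPS_idem sh : rhoPS (rhoPS sh) \subset rhoPS sh.
Proof.
apply/subsetP => S; rewrite !rhoPSE => /andP[-> /subset_trans]; apply.
by apply/subsetP => T /bigcupP[U]; rewrite rhoPSE => /andP[_ /subsetP]; apply.
Qed.

Lemma PS_P p : reflect (set0 \notin p /\ rhoPS p \subset p) (p \in PS VI).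
Proof.
apply: (iffP idP) => [/imsetP[sh _ ->]|[p0 rhop]].
  by split; [rewrite rhoPSE eqxx | apply: rhoPS_idem].
apply/imsetP; exists p; first by rewrite inE.
by apply/eqP; rewrite eqEsubset rhop rhoPS_ext.
Qed.

Lemma rhoPS_PS sh : rhoPS sh \in PS VI.
Proof. by apply/PS_P; split; [rewrite rhoPSE eqxx | apply: rhoPS_idem]. Qed.

Lemma rhoPS_id p : p \in PS VI -> rhoPS p = p.
Proof. by case/PS_P => p0 rhop; apply/eqP; rewrite eqEsubset rhop rhoPS_ext. Qed.

(* The cover condition of [rhoPSD p] for [T = [set a]] and [z = b] yields a set
   of [p] containing the pair {a, b}. *)
Lemma PS_PSD p : p \in PS VI -> p \in PSD VI.
Proof.
move=> pPS; have [p0 rhop] := PS_P _ pPS; apply/PSD_P; split=> //.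
apply/subsetP => S /rhoPSDP[S0 cover]; apply: (subsetP rhop); rewrite rhoPSE S0 /=.
apply/subsetP => T; rewrite pairsSE => /andP[TS /cards2P[a [b [ab TE]]]].
have aS : [set a] \subset S by rewrite sub1set (subsetP TS) // TE !inE eqxx.
have bS : b \in S by rewrite (subsetP TS) // TE !inE eqxx orbT.
have a1 : #|[set a]| < 2 by rewrite cards1.
have [U [Up aU US bU]] := cover _ b aS a1 bS.
by apply: (mem_pairsSH Up); rewrite pairsSE TE cards2 ab subUset aU sub1set bU.
Qed.

Lemma PS_single p x : p \in PS VI -> [set x] \in p.
Proof.
move=> /rhoPS_id <-; rewrite rhoPSE; apply/andP; split.
  by apply/set0Pn; exists x; rewrite inE.
apply/subsetP => T; rewrite pairsSE => /andP[/subset_leq_card le1 /eqP T2].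
by rewrite T2 cards1 in le1.
Qed.

Lemma PSDplus_PSD d : d \in PSDplus VI -> d \in PSD VI.
Proof. by case/setIdP. Qed.

Lemma PSDplus_single d x : d \in PSDplus VI -> [set x] \in d.
Proof. by case/setIdP => _ /forallP. Qed.

Lemma PS_PSDplus p : p \in PS VI -> p \in PSDplus VI.
Proof. by move=> pPS; rewrite inE PS_PSD //; apply/forallP => x; apply: PS_single. Qed.

Lemma PSDddag_PSDplus d : (d \in PSDddag VI) = (d \in PSDplus VI) && (setT \in d).
Proof. by rewrite !inE -andbA [_ && (setT \in d)]andbC. Qed.

Lemma PS_top p y : p \in PS VI -> setT \in p -> y \in PSD VI -> y \subset p.
Proof.
move=> pPS Tp yC; apply/subsetP => S Sy; rewrite -(rhoPS_id pPS) rhoPSE (PSD_neq0 yC Sy).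
apply/subsetP => T; rewrite pairsSE => /andP[_ T2].
by rewrite (mem_pairsSH Tp) ?pairsSE ?subsetT.
Qed.

Hypothesis VI0 : 0 < #|VI|.

Lemma setT_neq0 : [set: VI] != set0.
Proof. by have [x _] := card_gt0P VI0; apply/set0Pn; exists x. Qed.

Lemma setT_rhoPSD c : (forall x, [set x] \in c) -> pairsS setT \subset pairsSH c ->
  setT \in rhoPSD c.
Proof.
move=> c1 c2; apply/rhoPSDP; split=> [|T z _ T2 _]; first exact: setT_neq0.
have [zT2|zTn2] := eqVneq #|z |: T| 2.
  have /bigcupP[U Uc] : z |: T \in pairsSH c.
    by apply: (subsetP c2); rewrite pairsSE subsetT zT2.
  rewrite pairsSE => /andP[zTU _]; exists U; split=> //.
    exact: subset_trans (subsetUr _ _) zTU.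
  by rewrite (subsetP zTU) ?setU11.
have zT1 : #|z |: T| <= 1.
  by move: zTn2; rewrite cardsU1; case: (z \in T) T2 => /=; case: #|T| => [|[]].
exists [set z]; split=> //; last by rewrite inE.
apply/subsetP => t tT; apply/set1P; apply: (card_le1_eqP zT1); rewrite !inE ?tT ?eqxx ?orbT //.
Qed.

Lemma PSD_setU1T c : c \in PSD VI -> setT |: c \in PSD VI.
Proof.
move=> cC; have [c0 _] := PSD_P _ cC; apply/PSD_P; split.
  by rewrite in_setU1 negb_or eq_sym setT_neq0.
apply/subsetP => S /rhoPSDP[S0 cover]; rewrite in_setU1; have [//|SnT] := eqVneq S setT.
rewrite -(rhoPSD_id cC); apply/rhoPSDP; split=> // T z TS T2 zS.
have [U [/setU1P[UT|Uc] TU US zU]] := cover T z TS T2 zS; last by exists U.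
by case/eqP: SnT; apply/eqP; rewrite eqEsubset subsetT -UT.
Qed.

(* Otherwise [m] would be the meet of the strictly larger elements [rhoPS m]
   and [setT |: m], whose intersection is [m]. *)
Lemma meet_irr_PS m : m \in meet_irr (PSD VI) -> m \in PSDplus VI -> setT \notin m ->
  m \in PS VI.
Proof.
move=> mirr mplus mnT; have mC := PSDplus_PSD mplus; have [m0 _] := PSD_P _ mC.
have [rhom|rhomn] := boolP (rhoPS m \subset m); first exact/PS_P.
have rhomT : setT \notin rhoPS m.
  apply: contra mnT; rewrite rhoPSE => /andP[_ allpairs]; rewrite -(rhoPSD_id mC).
  by apply: setT_rhoPSD allpairs => x; apply: PSDplus_single.
have m_rho : m \proper rhoPS m by rewrite properE rhoPS_ext.
have m_T : m \proper setT |: m by rewrite properE subsetUr subUset sub1set (negbTE mnT).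
case/setIdP: mirr => _ /negP; case; apply/is_meetP; split=> //.
  by move=> a /setIdP[_ /proper_sub].
move=> y yC yup; apply/subsetP => S Sy.
have Srho : S \in rhoPS m.
  by apply: (subsetP (yup _ _)) Sy; rewrite inE PS_PSD ?rhoPS_PS.
have : S \in setT |: m.
  by apply: (subsetP (yup _ _)) Sy; rewrite inE PSD_setU1T.
by case/setU1P => // ST; rewrite -ST Srho in rhomT.
Qed.

Definition avoid_pair (a b : VI) : {set {set VI}} :=
  [set S | (S != set0) && ~~ ([set a; b] \subset S)].

Lemma avoid_pair_PS a b : a != b -> avoid_pair a b \in PS VI.
Proof.
move=> ab; apply/PS_P; split; first by rewrite inE eqxx.
apply/subsetP => S; rewrite rhoPSE inE => /andP[-> Sab] /=; apply/negP => abS.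
have /bigcupP[U] : [set a; b] \in pairsSH (avoid_pair a b).
  by apply: (subsetP Sab); rewrite pairsSE abS cards2 ab.
by rewrite inE pairsSE => /andP[_ /negP abU] /andP[/abU].
Qed.

Lemma mem_avoid_pair a b T : a != b -> T \in pairsS setT -> T != [set a; b] ->
  T \in avoid_pair a b.
Proof.
move=> ab; rewrite pairsSE inE => /andP[_ /eqP T2] Tab; apply/andP; split.
  by apply/set0Pn/card_gt0P; rewrite T2.
by apply: contra Tab => abT; rewrite eq_sym eqEcard abT T2 cards2 ab.
Qed.

Lemma is_meet_avoid_pairs p : p \in PS VI -> is_meet (PSD VI)
  [set avoid_pair a b | a in VI, b in VI & (a != b) && ([set a; b] \notin pairsSH p)] p.
Proof.
move=> pPS; apply/is_meetP; split=> [||y yC yup]; first exact: PS_PSD.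
  move=> _ /imset2P[a b _ /setIdP[_ /andP[ab abp]] ->]; apply/subsetP => S Sp.
  rewrite inE (PSD_neq0 (PS_PSD pPS) Sp); apply: contra abp => abS.
  by apply: (mem_pairsSH Sp); rewrite pairsSE abS cards2 ab.
apply/subsetP => S Sy; rewrite -(rhoPS_id pPS) rhoPSE (PSD_neq0 yC Sy) /=.
apply/subsetP => T; rewrite pairsSE => /andP[TS /cards2P[a [b [ab TE]]]].
rewrite TE; apply/negPn/negP => abp.
have : S \in avoid_pair a b.
  by apply: (subsetP (yup _ _)) Sy; apply/imset2P; exists a b; rewrite ?inE ?ab.
by rewrite inE -TE TS andbF.
Qed.

Lemma PS_sub_uco E : uco_image (PSD VI) E ->
  (forall a b, a != b -> avoid_pair a b \in E) -> PS VI \subset E.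
Proof.
move=> uE Eab; apply/subsetP => p pPS.
apply: (uco_image_meet uE _ (is_meet_avoid_pairs pPS)).
by apply/subsetP => _ /imset2P[a b _ /setIdP[_ /andP[ab _]] ->]; apply: Eab.
Qed.

Lemma PS_setT_above_avoid_pair p a b : p \in PS VI -> a != b ->
  avoid_pair a b \proper p -> setT \in p.
Proof.
move=> pPS ab /properP[abp [S Sp SnA]].
have abS : [set a; b] \subset S by move: SnA; rewrite inE (PSD_neq0 (PS_PSD pPS) Sp) negbK.
rewrite -(rhoPS_id pPS) rhoPSE; apply/andP; split; first by apply/set0Pn; exists a.
apply/subsetP => T TT; have [->|Tab] := eqVneq T [set a; b].
  by apply: (mem_pairsSH Sp); rewrite pairsSE abS cards2 ab.
apply: (mem_pairsSH (subsetP abp _ (mem_avoid_pair ab TT Tab))).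
by move: TT; rewrite !pairsSE subxx => /andP[].
Qed.

Lemma uco_PS : uco_image (PSD VI) (PS VI).
Proof.
apply/andP; split; first by apply/subsetP => p; apply: PS_PSD.
apply/forallP => X; apply/forallP => m; apply/implyP => /andP[XPS /is_meetP[mC mX mglb]].
apply/PS_P; split; first by case/PSD_P: mC.
apply: mglb; first exact/PS_PSD/rhoPS_PS.
move=> x xX; rewrite -(rhoPS_id (subsetP XPS x xX)); exact: rhoPS_mono (mX x xX).
Qed.

Lemma PSDddagE :
  PSDddag VI = [set c in PSD VI | rhoPSD (setT |: [set [set x] | x : VI]) \subset c].
Proof.
set base := setT |: _.
have base0 : set0 \notin base.
  rewrite in_setU1 negb_or eq_sym setT_neq0 /=.
  by apply/imsetP => -[x _ /setP/(_ x)]; rewrite !inE eqxx.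
apply/setP => c; rewrite [c \in PSDddag VI]inE [RHS]inE.
have [cC|//] := boolP (c \in PSD VI) => /=; apply/andP/idP => [[cT /forallP c1]|base_c].
  rewrite -(rhoPSD_id cC); apply: rhoPSD_mono.
  by apply/subsetP => S /setU1P[->|/imsetP[x _ ->]].
have {}base_c := subset_trans (rhoPSD_ext base0) base_c.
split; first by rewrite (subsetP base_c) ?setU11.
by apply/forallP => x; rewrite (subsetP base_c) // in_setU1 imset_f ?orbT.
Qed.

Lemma uco_PSDddag : uco_image (PSD VI) (PSDddag VI).
Proof. by rewrite PSDddagE uco_image_upper ?rhoPSD_PSD. Qed.

Definition Defminus := meet_closure (PSD VI) (meet_irr (PSD VI) :\: PSDplus VI).

Lemma complement_PSDplusE : complement (PSD VI) (PSDplus VI) = Defminus.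
Proof. by rewrite complementE //; apply/subsetP => d; apply: PSDplus_PSD. Qed.

Lemma Defminus_top g y : g \in Defminus -> (forall x, [set x] \in g) ->
  y \in PSD VI -> y \subset g.
Proof.
move=> gD g1; apply: (meet_closure_top gD) => a /setDP[airr aplus].
apply: contra aplus => ga; rewrite inE (subsetP (meet_irr_sub _) a airr).
by apply/forallP => x; apply: (subsetP ga).
Qed.

Lemma decomposition_PSD : decomposition3 (PSD VI) Defminus (PS VI) (PSDddag VI).
Proof.
split; [exact: uco_meet_closure | exact: uco_PS | exact: uco_PSDddag |].
apply/eqP; rewrite eqEsubset meet_closure_sub /=; apply/subsetP => c cC.
apply: (meet_closure_irr cC) => a airr _; rewrite !in_setU PSDddag_PSDplus.
have aC := subsetP (meet_irr_sub _) a airr.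
have [aplus|aminus] := boolP (a \in PSDplus VI); last first.
  by rewrite meet_closure_ext // inE aminus airr.
have [//|anT] := boolP (setT \in a); first by rewrite orbT.
by rewrite meet_irr_PS ?orbT.
Qed.

Lemma minimal_Defminus E : uco_image (PSD VI) E -> E \proper Defminus ->
  meet_closure (PSD VI) (E :|: PS VI :|: PSDddag VI) \proper PSD VI.
Proof.
move=> uE EDef; rewrite -setUA; apply: (complement_minimal _ _ uE EDef).
  by apply/subsetP => d; apply: PSDplus_PSD.
by rewrite subUset; apply/andP; split; apply/subsetP => d;
  [apply: PS_PSDplus | rewrite PSDddag_PSDplus => /andP[]].
Qed.

(* [avoid_pair a b] is lost, since the elements of the other components above it
   all contain [setT]. *)
Lemma minimal_PS E : uco_image (PSD VI) E -> E \proper PS VI ->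
  meet_closure (PSD VI) (Defminus :|: E :|: PSDddag VI) \proper PSD VI.
Proof.
move=> uE EPS; have /andP[EsubPS PSnE] := EPS.
have /existsP[a /existsP[b /andP[ab abE]]] :
    [exists a, exists b, (a != b) && (avoid_pair a b \notin E)].
  apply: contraR PSnE => /existsPn noab; apply: PS_sub_uco uE _ => a b ab.
  by move/existsPn/(_ b): (noab a); rewrite ab negbK.
have abPS := avoid_pair_PS ab; have abC := PS_PSD abPS.
rewrite properE meet_closure_sub; apply/subsetPn; exists (avoid_pair a b) => //.
apply: (notin_meet_closure (PSD_setU1T abC)).
  by rewrite subUset sub1set inE subsetT andbF.
move=> c /setUP[/setUP[cD|cE]|cddag] abc.
- apply: Defminus_top cD _ (PSD_setU1T abC) => x.
  exact: (subsetP abc) (PS_single _ abPS).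
- rewrite subUset abc sub1set andbT (PS_setT_above_avoid_pair (subsetP EsubPS c cE) ab) //.
  by rewrite properEneq abc andbT; apply: contraNneq abE => ->.
- by move: cddag; rewrite subUset abc sub1set andbT PSDddag_PSDplus => /andP[].
Qed.

(* Above [d], the elements of [Defminus] and of [PS] are the top of [PSD], so
   [d] would be a meet of elements of [E] alone. *)
Lemma minimal_PSDddag E : uco_image (PSD VI) E -> E \proper PSDddag VI ->
  meet_closure (PSD VI) (Defminus :|: PS VI :|: E) \proper PSD VI.
Proof.
move=> uE /properP[Eddag [d dddag dE]]; move: (dddag).
rewrite PSDddag_PSDplus => /andP[dplus dT].
rewrite properE meet_closure_sub; apply/subsetPn; exists d; first exact: PSDplus_PSD.
apply: contra dE => /meet_closure_drop_tops dE.
apply: (subsetP (meet_closure_uco uE (subxx E))); apply: dE => c /setUP[cD|cPS] dc y yC.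
  by apply: Defminus_top cD _ yC => x; apply: (subsetP dc); apply: PSDplus_single.
exact: PS_top cPS (subsetP dc _ dT) yC.
Qed.

End SharingDomains.

Theorem corollary5p3 (VI : finType) (n : nat) (Hn : #|VI| = n) (Hpos : 0 < n) :
  minimal_decomposition3 (PSD VI)
    (complement (PSD VI) (PSDplus VI)) (PS VI) (PSDddag VI).
Proof.
have VI0 : 0 < #|VI| by rewrite Hn.
rewrite complement_PSDplusE; split; first exact: decomposition_PSD.
split; [exact: minimal_Defminus | exact: minimal_PS | exact: minimal_PSDddag].
Qed.
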